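(* Let \(\mathcal G\) be an étale topological groupoid whose object space \(\mathcal G^{(0)}\) is sober, and let \(S=\mathrm{Bis}(\mathcal G)\) with idempotent part \(E\subseteq S\). Call \(e\in E\) irreducible if \(e\neq1\) and \(e=e_1e_2\) with \(e_1,e_2\in E\) implies \(e_1=e\) or \(e_2=e\). For irreducible \(e\in E\), define \(\varphi_e\colon E\to\{0,1\}\) by \(\varphi_e(f)=0\) if and only if \(f\le e\). Then each \(\varphi_e\) is a character on \(E\), and the set \(X\subseteq\hat E\) of all \(\varphi_e\) with \(e\) irreducible is \(S\)-invariant. Moreover, the restriction of \(\mathcal G(S)\) to \(X\) is naturally isomorphic to \(\mathcal G\).
   Context: A topological space is sober if every non-empty irreducible closed subset is the closure of a unique point. A closed set \(A\) is irreducible if \(A=A_1\cup A_2\) with \(A_i\) closed implies \(A_1=A\) or \(A_2=A\). A bisection of a topological groupoid is an open subset of the arrow space on which range and source maps are injective and open. A groupoid is étale if bisections cover its arrow space. \(\mathrm{Bis}(\mathcal G)\) is the inverse semigroup of bisections with \(st=\{gh:g\in s,h\in t\}\) and \(s^*=\{g^{-1}:g\in s\}\), unit \(1=\mathcal G^{(0)}\) and zero \(\emptyset\). Its idempotents are exactly the open subsets of \(\mathcal G^{(0)}\), with product \(\cap\) and order \(\subseteq\). For an inverse semigroup \(S\) with idempotents \(E\): a character is a map \(\varphi\colon E\to\{0,1\}\) with \(\varphi(0)=0\), \(\varphi(1)=1\), \(\varphi(ef)=\varphi(e)\varphi(f)\). \(\hat E\) is the set of characters with the topology generated by \(U_e=\{\varphi:\varphi(e)=1\}\).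 \(S\) acts on \(\hat E\) by \(s\cdot\varphi(e)=\varphi(s^*es)\) for \(\varphi\in U_{s^*s}\). \(\mathcal G(S)\) is the germ groupoid of this action. Objects are \(\hat E\). Arrows are classes \([s,\varphi]\) with \(s\in S\), \(\varphi\in U_{s^*s}\), where \((s,\varphi)\sim(t,\psi)\) iff \(\varphi=\psi\) and \(se=te\) for some \(e\in E\) with \(\varphi(e)=1\). The structure maps are \(\mathrm s[s,\varphi]=\varphi\), \(\mathrm r[s,\varphi]=s\cdot\varphi\), \([s,t\cdot\psi][t,\psi]=[st,\psi]\), with the topology generated by the sets \(\{[s,\varphi]:\varphi\in U\}\) for \(U\subseteq U_{s^*s}\) open. The restriction of a groupoid to an invariant subset \(X\) of objects is the subgroupoid of arrows with source (equivalently range) in \(X\). *)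

From HB Require Import structures.
From mathcomp Require Import all_boot.
From mathcomp Require Import boolp classical_sets topology.

Set Implicit Arguments.
Unset Strict Implicit.
Unset Printing Implicit Defensive.

Local Open Scope classical_set_scope.

Definition irreducible_closed (T : topologicalType) (A : set T) : Prop :=
  closed A /\
  forall A1 A2 : set T, closed A1 -> closed A2 -> A = A1 `|` A2 ->
    A1 = A \/ A2 = A.

Definition sober (T : topologicalType) : Prop :=
  forall A : set T, A !=set0 -> irreducible_closed A ->
    exists! x : T, closure [set x] = A.

(* unt embeds O as the unit space G^(0).  [mul g h] is the product     *)
(* "g h" (first h, then g), meaningful when src g = rng h.              *)

Record groupoid_data (O A : Type) := GroupoidData {
  src : A -> O;
  rng : A -> O;
  unt : O -> A;
  inv : A -> A;
  mul : A -> A -> A }.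

Section Groupoid.
Variables (O A : topologicalType) (G : groupoid_data O A).

Local Notation src := (src G).
Local Notation rng := (rng G).
Local Notation unt := (unt G).
Local Notation inv := (inv G).
Local Notation mul := (mul G).

Definition composable (p : A * A) : Prop := src p.1 = rng p.2.

Definition is_groupoid : Prop :=
  [/\ (forall x, src (unt x) = x /\ rng (unt x) = x),
      (forall g h, src g = rng h -> src (mul g h) = src h /\ rng (mul g h) = rng g),
      (forall g h k, src g = rng h -> src h = rng k ->
          mul (mul g h) k = mul g (mul h k)),
      (forall g, mul (unt (rng g)) g = g /\ mul g (unt (src g)) = g) &
      (forall g, [/\ src (inv g) = rng g, rng (inv g) = src g,
                     mul (inv g) g = unt (src g) & mul g (inv g) = unt (rng g)])].

(* structure maps continuous; multiplication continuous on the space of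
   composable pairs (subspace of the product A * A) *)
Definition is_top_groupoid : Prop :=
  [/\ is_groupoid,
      [/\ continuous src, continuous rng, continuous unt & continuous inv] &
      forall W : set A, open W ->
        exists V : set (A * A), open V /\
          [set p | composable p /\ W (mul p.1 p.2)] = V `&` composable].

Definition bisection (s : set A) : Prop :=
  [/\ open s,
      {in s &, injective src}, {in s &, injective rng},
      (forall V : set A, open V -> V `<=` s -> open (src @` V)) &
      (forall V : set A, open V -> V `<=` s -> open (rng @` V))].

Definition etale : Prop := forall g : A, exists s, bisection s /\ s g.

Definition bmul (s t : set A) : set A :=
  [set g | exists a b, [/\ s a, t b, src a = rng b & g = mul a b]].

Definition bstar (s : set A) : set A := inv @` s.

Definition bone : set A := range unt.

Definition idem (e : set A) : Prop := bisection e /\ bmul e e = e.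

Definition irreducible_idem (e : set A) : Prop :=
  [/\ idem e, e <> bone &
      forall e1 e2, idem e1 -> idem e2 -> e = bmul e1 e2 -> e1 = e \/ e2 = e].

(* characters on E.  A character is represented as a function on all
   subsets of A which vanishes outside E (so equality of characters is
   plain equality of functions). *)
Definition is_character (phi : set A -> bool) : Prop :=
  [/\ (forall f, ~ idem f -> phi f = false),
      phi set0 = false, phi bone = true &
      forall e f, idem e -> idem f -> phi (bmul e f) = phi e && phi f].

Definition Ehat : set (set A -> bool) := [set phi | is_character phi].

Definition Ue (e : set A) : set (set A -> bool) :=
  [set phi | is_character phi /\ phi e].

(* topology generated by a family B of subsets of a space X (ambient T):
   arbitrary unions of finite intersections (the empty intersection is X) *)
Definition gen_open (T : Type) (X : set T) (B : set (set T)) (W : set T) : Prop :=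
  exists F : set (seq (set T)),
    (forall l, F l -> forall b, b \in l -> B b) /\
    W = \bigcup_(l in F) foldr setI X l.

Definition Ehat_open (U : set (set A -> bool)) : Prop :=
  gen_open Ehat [set V | exists e, idem e /\ V = Ue e] U.

(* action of S on Ehat: s . phi (e) = phi (s* e s), for phi in U_{s*s} *)
Definition act (s : set A) (phi : set A -> bool) : set A -> bool :=
  fun e => `[< idem e >] && phi (bmul (bmul (bstar s) e) s).

Definition phi_e (e : set A) : set A -> bool :=
  fun f => `[< idem f /\ ~ (f `<=` e) >].

Definition Xset : set (set A -> bool) :=
  [set phi | exists e, irreducible_idem e /\ phi = phi_e e].

Definition S_invariant (Y : set (set A -> bool)) : Prop :=
  forall s phi, bisection s -> Y phi -> phi (bmul (bstar s) s) ->
    Y (act s phi).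

(* Arrows of G(S) are classes of pairs (s, phi); we work with the pairs
   and the germ equivalence [germ_eq]. *)

Definition germ := (set A * (set A -> bool))%type.

Definition germ_valid (p : germ) : Prop :=
  bisection p.1 /\ is_character p.2 /\ p.2 (bmul (bstar p.1) p.1).

Definition germ_eq (p q : germ) : Prop :=
  p.2 = q.2 /\ exists e, [/\ idem e, p.2 e & bmul p.1 e = bmul q.1 e].

Definition gsrc (p : germ) : set A -> bool := p.2.
Definition grng (p : germ) : set A -> bool := act p.1 p.2.
(* [s, t.psi][t, psi] = [st, psi] *)
Definition gmul (p q : germ) : germ := (bmul p.1 q.1, q.2).

(* basic open sets {[s,phi] : phi in U}, U open in Ehat, U in U_{s*s},
   as sets of representing pairs *)
Definition germ_basic (W : set germ) : Prop :=
  exists s U, [/\ bisection s, Ehat_open U, U `<=` Ue (bmul (bstar s) s) &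
    W = [set q | germ_valid q /\ U q.2 /\ germ_eq q (s, q.2)]].

Definition germ_open (W : set germ) : Prop := gen_open germ_valid germ_basic W.

Definition germ_restr : set germ := [set p | germ_valid p /\ Xset p.2].

(* (F0, F1) is an isomorphism of topological groupoids from G onto the
   restriction of G(S) to Xset (arrows of G(S) taken up to germ_eq;
   topologies on Xset and on the restriction are subspace topologies). *)
Definition germ_restriction_iso (F0 : O -> (set A -> bool)) (F1 : A -> germ) : Prop :=
  [/\ (* objects: homeomorphism O ~ Xset *)
      [/\ injective F0, F0 @` setT = Xset,
          (forall U : set O, open U ->
              exists W, Ehat_open W /\ F0 @` U = W `&` Xset) &
          (forall W, Ehat_open W -> open (F0 @^-1` W))],
      (* arrows: bijection onto classes of germs with source in Xset *)
      [/\ (forall g, germ_restr (F1 g)),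
          (forall g h, germ_eq (F1 g) (F1 h) -> g = h) &
          (forall p, germ_restr p -> exists g, germ_eq p (F1 g))],
      [/\ (forall g, gsrc (F1 g) = F0 (src g)),
          (forall g, grng (F1 g) = F0 (rng g)) &
          (forall g h, src g = rng h ->
              germ_eq (F1 (mul g h)) (gmul (F1 g) (F1 h)))] &
      (* arrows: homeomorphism *)
      [/\ (forall W, germ_open W -> open (F1 @^-1` W)) &
          (forall U : set A, open U -> exists W, germ_open W /\
              forall p, germ_restr p ->
                (W p <-> exists g, U g /\ germ_eq p (F1 g)))]].

End Groupoid.

(* Idempotent bisections of an etale groupoid are exactly the images [unt @` U]
   of the open subsets [U] of the unit space, multiplied by intersection.  So the
   irreducible idempotents correspond to the meet-irreducible proper open sets,
   which in a sober space are the complements of point closures; for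
   [e = unt @` (~` closure [set x])] the character [phi_e e] is evaluation at
   [x], i.e. [f |-> (unt x \in f)].  Sobriety also makes [x |-> phi_x]
   injective, and [s . phi_(src g) = phi_(rng g)] for [g] in [s].  The
   isomorphism sends [x] to [phi_x] and an arrow [g] to the germ of any
   bisection through [g] at [phi_(src g)]: two such bisections have the same
   germ, since they agree on their intersection. *)

From Pilot Require Import Defs.
From mathcomp Require Import all_boot.
From mathcomp Require Import boolp classical_sets topology.

Set Implicit Arguments.
Unset Strict Implicit.
Unset Printing Implicit Defensive.
Local Open Scope classical_set_scope.

Section SoberSpaces.
Variable T : topologicalType.

Lemma closure1_subset (C : set T) (x : T) : closed C -> C x -> closure [set x] `<=` C.
Proof. by move=> cC Cx; rewrite (closure_id C).1 //; apply: closureS => y ->. Qed.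

Lemma closure1_open (V : set T) (x y : T) : open V -> closure [set x] y -> V y -> V x.
Proof.
by move=> oV cxy Vy; have /cxy[z [-> //]] : nbhs y V by apply: open_nbhs_nbhs.
Qed.

Lemma open_subset_compl_closure1 (V : set T) (x : T) :
  open V -> V `<=` ~` closure [set x] <-> ~ V x.
Proof.
move=> oV; split=> [VC /VC|nVx y Vy cy]; first by apply; exact: subset_closure.
by apply: nVx; exact: closure1_open cy Vy.
Qed.

Lemma closure1_irreducible (x : T) : irreducible_closed (closure [set x]).
Proof.
split=> [|A1 A2 cA1 cA2 E]; first exact: closed_closure.
have [Ax|Ax] : (A1 `|` A2) x by rewrite -E; exact: subset_closure.
- by left; apply/seteqP; split; [rewrite E => y; left|exact: closure1_subset].
- by right; apply/seteqP; split; [rewrite E => y; right|exact: closure1_subset].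
Qed.

Lemma sober_indistinguishable (x y : T) : sober T ->
  (forall V, open V -> V x <-> V y) -> x = y.
Proof.
move=> Hs xy.
have cl_mem (a b : T) : (forall V, open V -> V a -> V b) -> closure [set b] a.
  move=> ab B; rewrite nbhsE => -[V [oV Va] VB].
  by exists b; split=> //; apply: VB; exact: ab.
have exy : closure [set x] = closure [set y].
  apply/seteqP; split; apply: closure1_subset; try exact: closed_closure;
    by apply: cl_mem => V oV /(xy V oV).
have clx0 : closure [set x] !=set0 by exists x; exact: subset_closure.
have [z [_ zuniq]] := Hs _ clx0 (closure1_irreducible x).
by rewrite -(zuniq x) // (zuniq y).
Qed.

Definition meet_irreducible_open (U : set T) : Prop :=
  [/\ open U, U <> setT &
      forall U1 U2, open U1 -> open U2 -> U = U1 `&` U2 -> U1 = U \/ U2 = U].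

Lemma compl_closure1_meet_irreducible (x : T) :
  meet_irreducible_open (~` closure [set x]).
Proof.
have clx : closure [set x] x by exact: subset_closure.
split=> [||U1 U2 oU1 oU2 E]; first exact/closed_openC/closed_closure.
  by move=> E; have : (~` closure [set x]) x by rewrite E.
have nUx : ~ (U1 `&` U2) x by rewrite -E.
have [U1x|nU1x] := pselect (U1 x); [right|left]; apply/seteqP;
  (split; last by rewrite E => y []); apply/open_subset_compl_closure1 => //.
by move=> U2x; exact: nUx.
Qed.

Lemma sober_meet_irreducible_open (U : set T) : sober T ->
  meet_irreducible_open U -> exists x, U = ~` closure [set x].
Proof.
move=> Hs [oU UT Uirr].
have C0 : ~` U !=set0.
  apply: contrapT => nC; apply: UT; apply/seteqP; split=> // y _.
  by apply: contrapT => Uy; apply: nC; exists y.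
have Cirr : irreducible_closed (~` U).
  split=> [|A1 A2 cA1 cA2 E]; first exact: open_closedC.
  have EU : U = ~` A1 `&` ~` A2 by rewrite -setCU -E setCK.
  have [<-|<-] := Uirr _ _ (closed_openC cA1) (closed_openC cA2) EU;
    rewrite setCK; by [left|right].
by have [x [clx _]] := Hs _ C0 Cirr; exists x; rewrite clx setCK.
Qed.

End SoberSpaces.

Lemma open_preimage_gen_open (T : Type) (U : topologicalType) (f : U -> T)
    (X : set T) (B : set (set T)) (W : set T) :
  gen_open X B W -> open (f @^-1` X) -> (forall b, B b -> open (f @^-1` b)) ->
  open (f @^-1` W).
Proof.
move=> [F [FB ->]] oX oB; rewrite preimage_bigcup; apply: bigcup_open => l Fl.
have {Fl} := FB l Fl; elim: l => [|b l IH] //= lB; rewrite preimage_setI; apply: openI.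
  by apply/oB/lB; rewrite inE eqxx.
by apply: IH => c cl; apply: lB; rewrite inE cl orbT.
Qed.

Section EtaleGroupoid.
Variables (O A : topologicalType) (G : groupoid_data O A).
Hypotheses (HG : is_top_groupoid G) (Het : etale G).

Local Notation src := (Defs.src G).
Local Notation rng := (Defs.rng G).
Local Notation unt := (Defs.unt G).
Local Notation inv := (Defs.inv G).
Local Notation mul := (Defs.mul G).

Let groupoidG : is_groupoid G. Proof. by case: HG. Qed.

Lemma src_unt x : src (unt x) = x. Proof. by case: groupoidG => /(_ x) []. Qed.
Lemma rng_unt x : rng (unt x) = x. Proof. by case: groupoidG => /(_ x) []. Qed.
Lemma src_mul g h : src g = rng h -> src (mul g h) = src h.
Proof. by case: groupoidG => _ /(_ g h) H *; case: H. Qed.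
Lemma rng_mul g h : src g = rng h -> rng (mul g h) = rng g.
Proof. by case: groupoidG => _ /(_ g h) H *; case: H. Qed.
Lemma mulA g h k : src g = rng h -> src h = rng k ->
  mul (mul g h) k = mul g (mul h k).
Proof. by case: groupoidG => _ _ H *; apply: H. Qed.
Lemma mul_untl g : mul (unt (rng g)) g = g.
Proof. by case: groupoidG => _ _ _ /(_ g) []. Qed.
Lemma mul_untr g : mul g (unt (src g)) = g.
Proof. by case: groupoidG => _ _ _ /(_ g) []. Qed.
Lemma src_inv g : src (inv g) = rng g.
Proof. by case: groupoidG => _ _ _ _ /(_ g) []. Qed.
Lemma rng_inv g : rng (inv g) = src g.
Proof. by case: groupoidG => _ _ _ _ /(_ g) []. Qed.
Lemma mul_invl g : mul (inv g) g = unt (src g).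
Proof. by case: groupoidG => _ _ _ _ /(_ g) []. Qed.
Lemma mul_invr g : mul g (inv g) = unt (rng g).
Proof. by case: groupoidG => _ _ _ _ /(_ g) []. Qed.

Lemma unt_inj : injective unt.
Proof. by move=> x y /(congr1 src); rewrite !src_unt. Qed.

Let structure_maps_continuous :
  [/\ continuous src, continuous rng, continuous unt & continuous inv].
Proof. by case: HG. Qed.

Lemma open_preimage_src V : open V -> open (src @^-1` V).
Proof. by case: structure_maps_continuous => /continuousP + _ _ _; apply. Qed.
Lemma open_preimage_rng V : open V -> open (rng @^-1` V).
Proof. by case: structure_maps_continuous => _ /continuousP + _ _; apply. Qed.
Lemma open_preimage_unt V : open V -> open (unt @^-1` V).
Proof. by case: structure_maps_continuous => _ _ /continuousP + _; apply. Qed.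
Lemma continuous_inv : continuous inv.
Proof. by case: structure_maps_continuous. Qed.

Lemma src_open V : open V -> open (src @` V).
Proof.
move=> oV.
have -> : src @` V = \bigcup_(s in bisection G) (src @` (V `&` s)).
  apply/seteqP; split=> [x [g Vg <-]|x [s _ [g [Vg _] <-]]]; last by exists g.
  by have [s [bs sg]] := Het g; exists s => //; exists g.
apply: bigcup_open => s [os _ _ H _]; apply: H; [exact: openI|exact: subIsetr].
Qed.

Lemma rng_open V : open V -> open (rng @` V).
Proof.
move=> oV.
have -> : rng @` V = \bigcup_(s in bisection G) (rng @` (V `&` s)).
  apply/seteqP; split=> [x [g Vg <-]|x [s _ [g [Vg _] <-]]]; last by exists g.
  by have [s [bs sg]] := Het g; exists s => //; exists g.
apply: bigcup_open => s [os _ _ _ H]; apply: H; [exact: openI|exact: subIsetr].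
Qed.

Lemma bisectionP s : bisection G s <->
  [/\ open s, (forall g h, s g -> s h -> src g = src h -> g = h) &
      (forall g h, s g -> s h -> rng g = rng h -> g = h)].
Proof.
split=> [[os i1 i2 _ _]|[os i1 i2]].
  by split=> // g h /mem_set sg /mem_set sh; [exact: i1|exact: i2].
split=> //; [move=> g h /set_mem ? /set_mem ?; exact: i1
            |move=> g h /set_mem ? /set_mem ?; exact: i2
            |by move=> V oV _; exact: src_open|by move=> V oV _; exact: rng_open].
Qed.

Lemma bisection_subset s t : bisection G s -> open t -> t `<=` s -> bisection G t.
Proof.
move=> /bisectionP [_ i1 i2] ot ts; apply/bisectionP; split=> // g h /ts sg /ts sh.
- exact: i1.
- exact: i2.
Qed.

Lemma open_bone : open (bone G).
Proof.
have -> : bone G = \bigcup_(s in bisection G) (s `&` rng @^-1` (unt @^-1` s)).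
  apply/seteqP; split=> [g [x _ <-]|g [s /bisectionP [_ _ i2] [sg sx]]].
    by have [s [bs sx]] := Het (unt x); exists s => //; split; rewrite //= rng_unt.
  by exists (rng g) => //; apply: i2; rewrite ?rng_unt.
apply: bigcup_open => s /bisectionP [os _ _].
exact/openI/open_preimage_rng/open_preimage_unt.
Qed.

Lemma unt_open V : open V -> open (unt @` V).
Proof.
move=> oV; have -> : unt @` V = bone G `&` rng @^-1` V.
  apply/seteqP; split=> [g [x Vx <-]|g [[x _ <-]]]; rewrite /= rng_unt //.
  by split; [exists x|].
by move=> Vx; exists x.
exact/openI/open_preimage_rng/oV/open_bone.
Qed.

Lemma bmul_units_r s e : e `<=` bone G ->
  bmul G s e = [set g | s g /\ e (unt (src g))].
Proof.
move=> eu; apply/seteqP; split=> [g [a [b [sa eb sab ->]]]|g [sg eg]].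
  have [x _ bx] := eu _ eb; move: sab eb; rewrite -bx rng_unt => <- eb.
  by rewrite mul_untr.
by exists g, (unt (src g)); rewrite rng_unt mul_untr.
Qed.

Lemma bmul_units e f : e `<=` bone G -> f `<=` bone G -> bmul G e f = e `&` f.
Proof.
move=> eu fu; rewrite bmul_units_r //; apply/seteqP.
by split=> g [eg]; have [x _ gx] := eu _ eg; move: eg; rewrite -gx /= src_unt.
Qed.

Lemma image_unt_preimage e : e `<=` bone G -> e = unt @` (unt @^-1` e).
Proof.
move=> eu; apply/seteqP; split=> [g eg|g [x ex <-] //].
by have [x _ gx] := eu _ eg; exists x; rewrite /= gx.
Qed.

Lemma image_unt_inj U V : unt @` U = unt @` V -> U = V.
Proof.
move=> UV; apply/seteqP; split=> x Ux.
  by have [y Vy /unt_inj <-] : (unt @` V) (unt x) by rewrite -UV; exists x.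
by have [y Uy /unt_inj <-] : (unt @` U) (unt x) by rewrite UV; exists x.
Qed.

Lemma bmul_image_unt U V : bmul G (unt @` U) (unt @` V) = unt @` (U `&` V).
Proof.
rewrite bmul_units; try by move=> g [x _ <-]; exists x.
apply/seteqP; split=> [g [[x Ux gx] [y Vy yg]]|g [x [Ux Vx] <-]].
  by exists x => //; split; rewrite // -(@unt_inj y x) // yg.
by split; exists x.
Qed.

Lemma idemP e : idem G e <-> exists2 U, open U & e = unt @` U.
Proof.
(* From [e e = e], each [g] in [e] is some [a b] with [a = g] (injectivity of
   [rng] on [e]), so [b = g^-1 g] is the unit at [src g]; as [b] lies in [e],
   injectivity of [src] on [e] gives [g = b]. *)
split=> [[/bisectionP [oe i1 i2] ee]|[U oU ->]].
  suff eu : e `<=` bone G.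
    by exists (unt @^-1` e); [exact: open_preimage_unt|exact: image_unt_preimage].
  move=> g eg; have : bmul G e e g by rewrite ee.
  case=> a [b [ea eb sab gab]].
  have ga : g = a by apply: i2 => //; rewrite gab rng_mul.
  have bg : b = unt (src g).
    have sgb : src g = rng b by rewrite ga.
    by rewrite -mul_invl {2}gab -ga -mulA ?src_inv // mul_invl sgb mul_untl.
  by exists (src g) => //; rewrite -bg; apply: i1 => //; rewrite gab src_mul.
split; last by rewrite bmul_image_unt setIid.
apply/bisectionP; split; first exact: unt_open.
- by move=> _ _ [x _ <-] [y _ <-]; rewrite !src_unt => ->.
- by move=> _ _ [x _ <-] [y _ <-]; rewrite !rng_unt => ->.
Qed.

Lemma idem_image_unt U : open U -> idem G (unt @` U).
Proof. by move=> oU; apply/idemP; exists U. Qed.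

Lemma idem_bone : idem G (bone G).
Proof. exact: idem_image_unt openT. Qed.

Lemma idem_units e : idem G e -> e `<=` bone G.
Proof. by case/idemP => U _ -> _ [x _ <-]; exists x. Qed.

Lemma idem_open e : idem G e -> open e.
Proof. by case/idemP => U oU ->; exact: unt_open. Qed.

Lemma idem_bmul e f : idem G e -> idem G f -> idem G (bmul G e f).
Proof.
case/idemP => U oU -> /idemP [V oV ->].
by rewrite bmul_image_unt; exact/idem_image_unt/openI.
Qed.

Lemma irreducible_idem_image_unt U : open U ->
  irreducible_idem G (unt @` U) <-> meet_irreducible_open U.
Proof.
move=> oU; split=> [[_ Ubone Uirr]|[_ UT Uirr]].
  split=> // [UT|U1 U2 oU1 oU2 EU]; first by apply: Ubone; rewrite UT.
  have := Uirr _ _ (idem_image_unt oU1) (idem_image_unt oU2).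
  by rewrite bmul_image_unt -EU => /(_ erefl) [] /image_unt_inj; [left|right].
split=> [|/image_unt_inj //|e1 e2 /idemP [U1 oU1 ->] /idemP [U2 oU2 ->]].
  exact: idem_image_unt.
rewrite bmul_image_unt => /image_unt_inj EU.
by have [<-|<-] := Uirr _ _ oU1 oU2 EU; [left|right].
Qed.

Definition unit_coclosure (x : O) : set A := unt @` (~` closure [set x]).

Lemma irreducible_unit_coclosure x : irreducible_idem G (unit_coclosure x).
Proof.
apply/irreducible_idem_image_unt; last exact: compl_closure1_meet_irreducible.
exact/closed_openC/closed_closure.
Qed.

Lemma irreducible_idem_coclosure e : sober O ->
  irreducible_idem G e -> exists x, e = unit_coclosure x.
Proof.
move=> Hs ie; have [ide _ _] := ie.
have [U oU eU] := (idemP e).1 ide; rewrite eU in ie.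
have [x Ux] := sober_meet_irreducible_open Hs ((irreducible_idem_image_unt oU).1 ie).
by exists x; rewrite eU Ux.
Qed.

Definition point_char (x : O) : set A -> bool :=
  fun f => `[< idem G f /\ f (unt x) >].

Lemma point_charP x f : point_char x f <-> idem G f /\ f (unt x).
Proof. by split=> /asboolP. Qed.

Lemma point_char_character x : is_character G (point_char x).
Proof.
split=> [f nf|||e f ie if'].
- by apply/negbTE/negP => /point_charP [].
- by apply/negbTE/negP => /point_charP [].
- by apply/point_charP; split; [exact: idem_bone|exists x].
have ief := idem_bmul ie if'.
rewrite (bmul_units (idem_units ie) (idem_units if')) in ief *.
apply/idP/andP=> [/point_charP [_ [ex fx]]|[/point_charP [_ ex] /point_charP [_ fx]]].
  by split; apply/point_charP.
by apply/point_charP.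
Qed.

Lemma point_char_inj : sober O -> injective point_char.
Proof.
move=> Hs x y xy; apply: sober_indistinguishable => // V oV.
have chiV z : point_char z (unt @` V) <-> V z.
  rewrite point_charP (image_inj unt_inj); split=> [[]//|Vz].
  by split; [exact: idem_image_unt|].
by rewrite -chiV xy chiV.
Qed.

Lemma idem_sub_unit_coclosure f x :
  idem G f -> f `<=` unit_coclosure x <-> ~ f (unt x).
Proof.
case/idemP => U oU ->; rewrite (image_inj unt_inj) -open_subset_compl_closure1 //.
split=> [|/image_subset] //; rewrite image_subP => sub y Uy.
by have [z zC /unt_inj <-] := sub _ Uy.
Qed.

Lemma phi_e_unit_coclosure x : phi_e G (unit_coclosure x) = point_char x.
Proof.
apply/funext => f; apply/asboolP/asboolP => -[idf fx]; split=> //.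
  by apply: contrapT; rewrite -idem_sub_unit_coclosure.
by rewrite idem_sub_unit_coclosure.
Qed.

Lemma XsetP phi : sober O -> Xset G phi <-> exists x, phi = point_char x.
Proof.
move=> Hs; split=> [[e [ie ->]]|[x ->]].
  have [x ->] := irreducible_idem_coclosure Hs ie.
  by exists x; rewrite phi_e_unit_coclosure.
exists (unit_coclosure x); rewrite phi_e_unit_coclosure.
by split=> //; exact: irreducible_unit_coclosure.
Qed.

Lemma bmul_bstar_conj s e : bisection G s -> e `<=` bone G ->
  bmul G (bmul G (bstar G s) e) s = unt @` (src @` [set g | s g /\ e (unt (rng g))]).
Proof.
move=> /bisectionP [_ _ i2] eu; rewrite (bmul_units_r (bstar G s) eu).
apply/seteqP; split=> [g [a [b [[[c sc <-] eci] sb cb ->]]]|g [y [b [sb eb] <-] <-]].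
  rewrite src_inv in cb eci; rewrite (i2 c b) // mul_invl.
  by exists (src b) => //; exists b => //; split; rewrite // -cb.
exists (inv b), b; rewrite src_inv mul_invl; split=> //.
by split; [exists b|rewrite src_inv].
Qed.

Lemma bmul_bone_r s : bmul G s (bone G) = s.
Proof.
rewrite bmul_units_r //; apply/seteqP; split=> [g []|g sg] //.
by split=> //; exists (src g).
Qed.

Lemma bmul_bstar_bisection s : bisection G s ->
  bmul G (bstar G s) s = unt @` (src @` s).
Proof.
move=> bs; rewrite -[in bmul _ (bstar _ _) _](bmul_bone_r (bstar G s)).
rewrite bmul_bstar_conj //; congr (unt @` (src @` _)).
by apply/seteqP; split=> [g []|g sg] //; split=> //; exists (rng g).
Qed.

Lemma point_char_bmul_bstar x s : bisection G s ->
  point_char x (bmul G (bstar G s) s) <-> exists2 g, s g & src g = x.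
Proof.
move=> bs; rewrite bmul_bstar_bisection // point_charP (image_inj unt_inj).
split=> [[_ [g sg <-]]|[g sg <-]]; first by exists g.
split; last by exists g.
by apply/idem_image_unt/src_open; case/bisectionP: bs.
Qed.

Lemma act_point_char s g : bisection G s -> s g ->
  act G s (point_char (src g)) = point_char (rng g).
Proof.
move=> bs sg; apply/funext => f; rewrite /act.
have [idf|nidf] := pselect (idem G f); last first.
  by rewrite asboolF //; apply/esym/negbTE/negP => /point_charP [].
have /bisectionP [os i1 _] := bs.
rewrite asboolT //= (bmul_bstar_conj bs (idem_units idf)).
apply/idP/idP => [/point_charP [_]|/point_charP [_ fg]].
  rewrite (image_inj unt_inj) => -[h [sh fh] hg].
  by apply/point_charP; rewrite -(i1 _ _ sh sg hg).
apply/point_charP; split; last by exists (src g) => //; exists g.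
apply/idem_image_unt/src_open.
exact: openI os (open_preimage_rng (open_preimage_unt (idem_open idf))).
Qed.

Lemma open_bmul s t : open s -> open t -> open (bmul G s t).
Proof.
(* Near [a0 b0], write [g = a (a^-1 g)] with [a] in [s] and [rng a = rng g];
   continuity of [inv] and of the product at [(a0^-1, a0 b0)] puts [a^-1 g] in [t]. *)
move=> os ot; rewrite openE => _ [a0 [b0 [sa0 tb0 c0 ->]]].
case: HG => _ _ /(_ t ot) [V [oV EV]].
have VP p : composable G p -> (V p <-> t (mul p.1 p.2)).
  move=> cp; split=> [Vp|tp].
    by have [] : [set p | composable G p /\ t (mul p.1 p.2)] p by rewrite EV.
  by have [] : (V `&` composable G) p by rewrite -EV.
have : nbhs (inv a0, mul a0 b0) V.
  apply: open_nbhs_nbhs; split=> //; apply/VP; rewrite /composable /=.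
    by rewrite src_inv rng_mul.
  by rewrite -mulA ?src_inv // mul_invl c0 mul_untl.
case=> [[P Q]] /= [nP nQ] PQV.
have : nbhs a0 (inv @^-1` P) by exact: continuous_inv.
rewrite nbhsE => -[P' [oP' P'a0] P'P].
have nR : nbhs (mul a0 b0) (rng @^-1` (rng @` (s `&` P'))).
  apply: open_nbhs_nbhs; split; first exact/open_preimage_rng/rng_open/openI.
  by exists a0; rewrite ?rng_mul.
apply: filterS (filterI nQ nR) => g [Qg [a [sa P'a] ag]].
have cp : composable G (inv a, g) by rewrite /composable /= src_inv.
have tb : t (mul (inv a) g) by apply/(VP _ cp)/PQV; split=> //; exact: P'P.
exists a, (mul (inv a) g); split=> //; first by rewrite rng_mul ?rng_inv ?src_inv.
by rewrite -mulA ?rng_inv ?src_inv // mul_invr ag mul_untl.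
Qed.

Lemma bisection_bmul s t : bisection G s -> bisection G t -> bisection G (bmul G s t).
Proof.
move=> /bisectionP [os s_src s_rng] /bisectionP [ot t_src t_rng].
apply/bisectionP; split; first exact: open_bmul.
  move=> _ _ [a [b [sa tb cab ->]]] [a' [b' [sa' tb' cab' ->]]].
  rewrite !src_mul // => bb'; have eb : b = b' by exact: t_src.
  by rewrite eb (s_src a a') // cab cab' eb.
move=> _ _ [a [b [sa tb cab ->]]] [a' [b' [sa' tb' cab' ->]]].
rewrite !rng_mul // => aa'; have ea : a = a' by exact: s_rng.
by rewrite ea (t_rng b b') // -cab -cab' ea.
Qed.

Lemma bmul_unit_src_image s W : bisection G s -> W `<=` s ->
  bmul G s (unt @` (src @` W)) = W.
Proof.
move=> /bisectionP [_ s_src _] Ws.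
rewrite bmul_units_r; last by move=> _ [x _ <-]; exists x.
apply/seteqP; split=> [g [sg]|g Wg].
  by rewrite (image_inj unt_inj) => -[w Ww wg]; rewrite (s_src g w) //; exact: Ws.
by split; [exact: Ws|rewrite (image_inj unt_inj); exists g].
Qed.

Lemma germ_eq_bisections s t a : bisection G s -> bisection G t -> s a -> t a ->
  germ_eq G (s, point_char (src a)) (t, point_char (src a)).
Proof.
(* Both [s] and [t] restrict to [s `&` t] over the open set [src @` (s `&` t)]. *)
move=> bs bt sa ta; split=> //=; exists (unt @` (src @` (s `&` t))).
have idW : idem G (unt @` (src @` (s `&` t))).
  by apply/idem_image_unt/src_open/openI; [case/bisectionP: bs|case/bisectionP: bt].
split=> //; first by apply/point_charP; split=> //; exists (src a) => //; exists a.
by rewrite !bmul_unit_src_image // => g [].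
Qed.

Lemma germ_eq_mem s t x g : germ_eq G (s, point_char x) (t, point_char x) ->
  src g = x -> s g <-> t g.
Proof.
move=> [_ [e [ide /point_charP [_ ex] E]]] gx.
have bmul_e (r : set A) : bmul G r e g <-> r g.
  by rewrite (bmul_units_r _ (idem_units ide)) /= gx; split=> [[]|].
by rewrite -bmul_e E bmul_e.
Qed.

Lemma open_Ue e : idem G e -> Ehat_open G (Ue G e).
Proof.
move=> ide; exists [set [:: Ue G e]]; split.
  by move=> l -> b; rewrite inE => /eqP ->; exists e.
apply/seteqP; split=> [phi [chphi ephi]|phi [l -> /= [] //]].
by exists [:: Ue G e] => //=; split.
Qed.

Lemma open_preimage_point_char W : Ehat_open G W -> open (point_char @^-1` W).
Proof.
move=> oW; apply: (open_preimage_gen_open oW).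
  have -> : point_char @^-1` Ehat G = setT.
    by apply/seteqP; split=> // x _; exact: point_char_character.
  exact: openT.
move=> _ [e [ide ->]]; have -> : point_char @^-1` Ue G e = unt @^-1` e.
  apply/seteqP; split=> [x [_ /point_charP []] //|x ex].
  by split; [exact: point_char_character|apply/point_charP].
exact/open_preimage_unt/idem_open.
Qed.

Definition bis_at (g : A) : set A := projT1 (cid (Het g)).

Lemma bisection_bis_at g : bisection G (bis_at g).
Proof. by rewrite /bis_at; case: cid => s []. Qed.

Lemma bis_at_mem g : bis_at g g.
Proof. by rewrite /bis_at; case: cid => s []. Qed.

Definition germ_at (g : A) : germ A := (bis_at g, point_char (src g)).

Lemma germ_eq_germ_atP p g : germ_valid G p ->
  germ_eq G p (germ_at g) <-> p.1 g /\ p.2 = point_char (src g).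
Proof.
case: p => s phi [/= bs _]; split=> [E|[sg ->]]; last first.
  exact: germ_eq_bisections (bisection_bis_at g) sg (bis_at_mem g).
have phig : phi = point_char (src g) by case: E.
by split=> //; rewrite phig in E; apply/(germ_eq_mem E erefl); exact: bis_at_mem.
Qed.

Section Sober.
Hypothesis Hs : sober O.

Lemma point_char_homeomorphism :
  [/\ injective point_char, point_char @` setT = Xset G,
      (forall U : set O, open U ->
          exists W, Ehat_open G W /\ point_char @` U = W `&` Xset G) &
      (forall W, Ehat_open G W -> open (point_char @^-1` W))].
Proof.
split; [exact: point_char_inj| |move=> U oU|exact: open_preimage_point_char].
  apply/seteqP; split=> [_ [x _ <-]|phi /(XsetP _ Hs) [x ->]]; last by exists x.
  by apply/(XsetP _ Hs); exists x.
have idU := idem_image_unt oU.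
exists (Ue G (unt @` U)); split; first exact: open_Ue.
apply/seteqP; split=> [_ [x Ux <-]|phi [[_ Uphi] /(XsetP _ Hs) [x phix]]].
  split; last by apply/(XsetP _ Hs); exists x.
  by split; [exact: point_char_character|apply/point_charP].
move: Uphi; rewrite phix => /point_charP [_]; rewrite (image_inj unt_inj) => Ux.
by exists x.
Qed.

Lemma germ_restr_germ_at g : germ_restr G (germ_at g).
Proof.
split; last by apply/(XsetP _ Hs); exists (src g).
split; first exact: bisection_bis_at.
split; first exact: point_char_character.
apply/point_char_bmul_bstar; first exact: bisection_bis_at.
by exists g; first exact: bis_at_mem.
Qed.

Lemma germ_at_inj g h : germ_eq G (germ_at g) (germ_at h) -> g = h.
Proof.
have [valid_g _] := germ_restr_germ_at g.
move=> /(germ_eq_germ_atP _ valid_g) [/= gh /point_char_inj] /(_ Hs) srcgh.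
case/bisectionP: (bisection_bis_at g) => _ bis_src _.
by apply: bis_src => //; exact: bis_at_mem.
Qed.

Lemma germ_restr_point_char p : germ_restr G p ->
  exists2 g, p.1 g & p.2 = point_char (src g).
Proof.
case: p => s phi [[/= bs [_ phis]] /(XsetP _ Hs) [x /= phix]].
by move: phis; rewrite phix => /(point_char_bmul_bstar x bs) [g sg <-]; exists g.
Qed.

Lemma germ_at_surj p : germ_restr G p -> exists g, germ_eq G p (germ_at g).
Proof.
move=> rp; have [g pg phig] := germ_restr_point_char rp.
by exists g; apply/germ_eq_germ_atP => //; case: rp.
Qed.

Lemma germ_at_mul g h : src g = rng h ->
  germ_eq G (germ_at (mul g h)) (gmul G (germ_at g) (germ_at h)).
Proof.
move=> gh; rewrite /germ_at /gmul /= -(src_mul gh).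
apply: germ_eq_bisections; [exact: bisection_bis_at|..|exact: bis_at_mem|].
  by apply: bisection_bmul; exact: bisection_bis_at.
by exists g, h; split=> //; exact: bis_at_mem.
Qed.

Lemma open_preimage_germ_at W : germ_open G W -> open (germ_at @^-1` W).
Proof.
move=> oW; apply: (open_preimage_gen_open oW).
  have -> : germ_at @^-1` germ_valid G = setT.
    by apply/seteqP; split=> // g _; case: (germ_restr_germ_at g).
  exact: openT.
move=> _ [s [U [bs oU UUe ->]]].
have -> : germ_at @^-1` [set q | germ_valid G q /\ U q.2 /\ germ_eq G q (s, q.2)] =
          s `&` src @^-1` (point_char @^-1` U).
  apply/seteqP; split=> [g [_ [Ug E]]|g [sg Ug]].
    by split=> //; apply/(germ_eq_mem E erefl); exact: bis_at_mem.
  split; first by case: (germ_restr_germ_at g).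
  split=> //; apply: germ_eq_bisections => //; first exact: bisection_bis_at.
  exact: bis_at_mem.
apply: openI; first by case/bisectionP: bs.
exact/open_preimage_src/open_preimage_point_char.
Qed.

(* The basic open set of germs of [s], with the largest admissible [U]. *)
Definition germ_nbhd (s : set A) : set (germ A) :=
  [set q | germ_valid G q /\ Ue G (bmul G (bstar G s) s) q.2 /\ germ_eq G q (s, q.2)].

Lemma germ_basic_germ_nbhd s : bisection G s -> germ_basic G (germ_nbhd s).
Proof.
move=> bs; exists s, (Ue G (bmul G (bstar G s) s)); split=> //.
apply/open_Ue; rewrite bmul_bstar_bisection //.
by apply/idem_image_unt/src_open; case/bisectionP: bs.
Qed.

Lemma germ_nbhdP s p : bisection G s -> germ_restr G p ->
  germ_nbhd s p <-> exists2 g, s g & germ_eq G p (germ_at g).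
Proof.
move=> bs rp; have [g pg phig] := germ_restr_point_char rp.
case: p rp pg phig => t phi rp /= tg phig; subst phi; have [vp _] := rp.
split=> [[_ [[_ /(point_char_bmul_bstar _ bs) [h sh hg]] /= E]]|[h sh E]].
  exists h => //; apply/(germ_eq_germ_atP _ vp); split; last by rewrite hg.
  exact: (germ_eq_mem E hg).2 sh.
have [/= th phih] := (germ_eq_germ_atP _ vp).1 E.
split=> //; split; last by rewrite phih; exact: germ_eq_bisections (proj1 vp) bs th sh.
rewrite phih; split; first exact: point_char_character.
by apply/point_char_bmul_bstar => //; exists h.
Qed.

Lemma germ_at_open U : open U -> exists W, germ_open G W /\
  forall p, germ_restr G p -> (W p <-> exists g, U g /\ germ_eq G p (germ_at g)).
Proof.
move=> oU.
pose F := [set l | exists2 s, bisection G s /\ s `<=` U & l = [:: germ_nbhd s]].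
exists (\bigcup_(l in F) foldr setI (germ_valid G) l); split.
  exists F; split=> // _ [s [bs _] ->] b; rewrite inE => /eqP ->.
  exact: germ_basic_germ_nbhd.
move=> p rp; split=> [[_ [s [bs sU] ->] [/(germ_nbhdP bs rp) [g sg E] _]]|[g [Ug E]]].
  by exists g; split=> //; exact: sU.
have bsU : bisection G (bis_at g `&` U).
  apply: bisection_subset (bisection_bis_at g) _ (@subIsetl _ _ _).
  by apply: openI oU; case/bisectionP: (bisection_bis_at g).
exists [:: germ_nbhd (bis_at g `&` U)].
  by exists (bis_at g `&` U) => //; split=> // h [].
split; last by case: rp.
by apply/(germ_nbhdP bsU rp); exists g => //; split=> //; exact: bis_at_mem.
Qed.

Lemma is_character_phi_e e : irreducible_idem G e -> is_character G (phi_e G e).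
Proof.
move=> ie; have [x ->] := irreducible_idem_coclosure Hs ie.
by rewrite phi_e_unit_coclosure; exact: point_char_character.
Qed.

Lemma S_invariant_Xset : S_invariant G (Xset G).
Proof.
move=> s _ bs /(XsetP _ Hs) [x ->] /(point_char_bmul_bstar _ bs) [g sg <-].
by rewrite act_point_char //; apply/(XsetP _ Hs); exists (rng g).
Qed.

Lemma germ_restriction_iso_germ_at : germ_restriction_iso G point_char germ_at.
Proof.
split; first exact: point_char_homeomorphism.
- by split; [exact: germ_restr_germ_at|exact: germ_at_inj|exact: germ_at_surj].
- split=> // [g|]; last exact: germ_at_mul.
  by rewrite /grng act_point_char //; [exact: bisection_bis_at|exact: bis_at_mem].
- by split; [exact: open_preimage_germ_at|exact: germ_at_open].
Qed.

End Sober.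

End EtaleGroupoid.

Theorem proposition5p4 (O A : topologicalType) (G : groupoid_data O A) :
  is_top_groupoid G -> etale G -> sober O ->
  [/\ (forall e, irreducible_idem G e -> is_character G (phi_e G e)),
      S_invariant G (Xset G) &
      exists (F0 : O -> (set A -> bool)) (F1 : A -> germ A),
        germ_restriction_iso G F0 F1].
Proof.
move=> HG Het Hs; split.
- exact: is_character_phi_e.
- exact: S_invariant_Xset.
- by exists (point_char G), (germ_at Het); exact: germ_restriction_iso_germ_at.
Qed.
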